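(* Let $b>1$, $p\ge1$, $R\subseteq\{0,\ldots,p-1\}$. Let $k$ be the greatest divisor of $p$ coprime with $b$, $d=p/k$, and $j$ the least integer $j\ge0$ such that $d$ divides $b^j$. If $s,s'$ are states of $\mathcal{A}_{R,p}$ with $s\equiv s'\pmod k$, then $s$ and $s'$ are $j$-ultimately-equivalent.
   Context: $A_b=\{0,\ldots,b-1\}$. $\mathcal{A}_{R,p}$: complete deterministic automaton over $A_b$ with states $\{0,\ldots,p-1\}$, initial $0$, final $R$, transitions $n\xrightarrow{a}(nb+a)\bmod p$. For an integer $m\ge0$, two states $s,s'$ are $m$-ultimately-equivalent if for every word $u$ with $|u|\ge m$, $s\cdot u=s'\cdot u$, where $s\cdot u$ is the state reached from $s$ by reading $u$. *)

From mathcomp Require Import all_boot.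
Set Implicit Arguments. Unset Strict Implicit. Unset Printing Implicit Defensive.

(* The automaton A_{R,p} over the alphabet A_b = 'I_b = {0,...,b-1}.
   States are {0,...,p-1} = 'I_p (p >= 1), initial state 0, final states R,
   transition n --a--> (n*b + a) mod p. *)
Record automaton (b p : nat) := Automaton {
  init : 'I_p;
  final : {set 'I_p};
  delta : 'I_p -> 'I_b -> 'I_p }.

Definition Astep (b p : nat) (Hp : 0 < p) (n : 'I_p) (a : 'I_b) : 'I_p :=
  Ordinal (ltn_pmod (n * b + a) Hp).

Definition A_Rp (b p : nat) (Hp : 0 < p) (R : {set 'I_p}) : automaton b p :=
  Automaton (Ordinal Hp) R (@Astep b p Hp).

Definition read (b p : nat) (A : automaton b p) (s : 'I_p) (u : seq 'I_b) : 'I_p :=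
  foldl (delta A) s u.

Definition ult_equiv (b p : nat) (A : automaton b p) (m : nat) (s s' : 'I_p) : Prop :=
  forall u : seq 'I_b, m <= size u -> read A s u = read A s' u.

From mathcomp Require Import all_boot.

(* Reading a word u from state s lands in the state (s * b^|u| + [u]_b) mod p,
   where [u]_b is the integer with base-b digits u.  Two states therefore lead
   to the same state after u as soon as s * b^|u| = s' * b^|u| mod p.  Writing
   p = d * k, the factor k divides s - s' by hypothesis and d divides
   b^j, hence b^|u| whenever |u| >= j. *)

Definition digits_val (b : nat) (u : seq 'I_b) : nat :=
  foldl (fun n (a : 'I_b) => n * b + a) 0 u.

Lemma foldl_digits (b : nat) (u : seq 'I_b) (n : nat) :
  foldl (fun n (a : 'I_b) => n * b + a) n u = n * b ^ size u + digits_val b u.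
Proof.
rewrite /digits_val; elim: u n => [|a u IHu] n /=; first by rewrite muln1 addn0.
by rewrite IHu [in RHS]IHu mul0n add0n mulnDl addnA -mulnA -expnS.
Qed.

Lemma val_read_A_Rp (b p : nat) (Hp : 0 < p) (R : {set 'I_p})
    (s : 'I_p) (u : seq 'I_b) :
  val (read (@A_Rp b p Hp R) s u) = (s * b ^ size u + digits_val b u) %% p.
Proof.
elim: u s => [|a u IHu] s /=; first by rewrite muln1 addn0 modn_small.
rewrite IHu /= -modnDml modnMml modnDml {2}/digits_val /= mul0n add0n.
by rewrite foldl_digits mulnDl -addnA -mulnA -expnS.
Qed.

Lemma read_A_Rp_congr (b p : nat) (Hp : 0 < p) (R : {set 'I_p})
    (s s' : 'I_p) (u : seq 'I_b) :
  s * b ^ size u = s' * b ^ size u %[mod p] ->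
  read (@A_Rp b p Hp R) s u = read (@A_Rp b p Hp R) s' u.
Proof.
by move=> eq_sb; apply: val_inj; rewrite !val_read_A_Rp -modnDml eq_sb modnDml.
Qed.

Lemma modnM_congr (k d x y z : nat) :
  x = y %[mod k] -> d %| z -> x * z = y * z %[mod d * k].
Proof.
wlog le_yx : x y / y <= x.
  move=> W; have [/W // | /ltnW /W W_yx] := leqP y x.
  by move=> /esym eq_yx d_dvd_z; rewrite (W_yx eq_yx d_dvd_z).
move/eqP; rewrite eqn_mod_dvd // => k_dvd_xy d_dvd_z.
by apply/eqP; rewrite eqn_mod_dvd ?leq_mul2r ?le_yx ?orbT // -mulnBl mulnC dvdn_mul.
Qed.

Theorem lemma21 (b p : nat) (Hb : 1 < b) (Hp : 0 < p) (R : {set 'I_p})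
  (k d j : nat)
  (Hk : [/\ k %| p, coprime k b &
         forall k', k' %| p -> coprime k' b -> k' <= k])
  (Hd : d = p %/ k)
  (Hj : d %| b ^ j /\ forall j', d %| b ^ j' -> j <= j')
  (s s' : 'I_p) :
  s = s' %[mod k] -> ult_equiv (@A_Rp b p Hp R) j s s'.
Proof.
case: Hk => k_dvd_p _ _; case: Hj => d_dvd_bj _ eq_ss' u j_le_u.
apply: read_A_Rp_congr.
suff: s * b ^ size u = s' * b ^ size u %[mod d * k] by rewrite Hd divnK.
apply: modnM_congr eq_ss' _.
exact: dvdn_trans d_dvd_bj (dvdn_exp2l b j_le_u).
Qed.
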